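(* $\mathrm{mdim}_{\mathbb{C}}(G_2)=8$ and $\mathrm{mdim}_{\mathbb{R}}(G_2)=16$. Moreover, a faithful real representation of $G_2$ of minimal dimension $16$ may be obtained by restriction of scalars from a faithful complex representation of $G_2$.
   Context: The $2\times2\times2$ Rubik's cube consists of 8 corner cubelets, each carrying 3 colored stickers (24 stickers in all). Corner positions are numbered 1 = top-front-left, 2 = top-front-right, 3 = top-back-left, 4 = top-back-right, 5 = bottom-front-left, 6 = bottom-front-right, 7 = bottom-back-left, 8 = bottom-back-right. $G_2$ is the subgroup of the symmetric group on the 24 stickers generated by the six moves $u,d,f,b,l,r$, which rotate respectively the top, bottom, front, back, left, right layer of four cubelets by $90^\circ$ clockwise as seen by an observer outside the cube facing that face, leaving the other four cubelets fixed. For a finite group $G$ and field $F$, $\mathrm{mdim}_F(G)$ is the smallest dimension of a faithful representation of $G$ over $F$. *)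

From HB Require Import structures.
From mathcomp Require Import all_boot all_order all_algebra all_fingroup.
From mathcomp Require Import mxrepresentation.
From mathcomp Require Import complex.
From mathcomp Require Import Rstruct.

Set Implicit Arguments.
Unset Strict Implicit.
Unset Printing Implicit Defensive.
Import GRing.Theory Num.Theory.
Local Open Scope ring_scope.

(* Coordinates: axis 0 = x (right = +1, left = -1),
                axis 1 = y (top = +1, bottom = -1),
                axis 2 = z (front = +1, back = -1)   (right-handed frame).
   A corner cubelet sits at a point of {-1,1}^3, coded by three booleans
   (true = +1).  A sticker is a pair (corner, axis a): the sticker of that
   corner lying on the face perpendicular to axis a. 8 * 3 = 24 stickers. *)
Definition sticker : finType := ((bool * bool * bool) * 'I_3)%type.

Definition vec3 := (int * int * int)%type.

Definition sgnb (b : bool) : int := if b then 1 else -1.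

Definition coord (v : vec3) (a : 'I_3) : int :=
  match val a with 0 => v.1.1 | 1 => v.1.2 | _ => v.2 end.

Definition basis (a : 'I_3) (s : int) : vec3 :=
  match val a with 0 => (s, 0, 0) | 1 => (0, s, 0) | _ => (0, 0, s) end.

Definition dot (u v : vec3) : int := u.1.1 * v.1.1 + u.1.2 * v.1.2 + u.2 * v.2.
Definition cross (n v : vec3) : vec3 :=
  (n.1.2 * v.2 - n.2 * v.1.2, n.2 * v.1.1 - n.1.1 * v.2,
   n.1.1 * v.1.2 - n.1.2 * v.1.1).
Definition vscale (k : int) (v : vec3) : vec3 := (k * v.1.1, k * v.1.2, k * v.2).
Definition vsub (u v : vec3) : vec3 := (u.1.1 - v.1.1, u.1.2 - v.1.2, u.2 - v.2).

(* Rotation by -90 degrees about the unit vector n (Rodrigues' formula),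
   i.e. a quarter turn clockwise as seen from the tip of n looking back
   at the origin:  R v = (n.v) n - n x v. *)
Definition rotcw (n v : vec3) : vec3 := vsub (vscale (dot n v) n) (cross n v).

Definition corner_vec (c : bool * bool * bool) : vec3 :=
  (sgnb c.1.1, sgnb c.1.2, sgnb c.2).
Definition sticker_normal (s : sticker) : vec3 :=
  basis s.2 (coord (corner_vec s.1) s.2).

Definition vec_corner (v : vec3) : bool * bool * bool :=
  (0 < v.1.1, 0 < v.1.2, 0 < v.2).
Definition ax0 : 'I_3 := @Ordinal 3 0 isT.
Definition ax1 : 'I_3 := @Ordinal 3 1 isT.
Definition ax2 : 'I_3 := @Ordinal 3 2 isT.
Definition vec_axis (v : vec3) : 'I_3 :=
  if v.1.1 != 0 then ax0 else if v.1.2 != 0 then ax1 else ax2.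

(* The face move perpendicular to axis a on the side sg (true = +): the
   four cubelets of that layer are rotated by 90 degrees clockwise as seen
   by an observer outside the cube facing that face; other stickers fixed. *)
Definition move_fun (a : 'I_3) (sg : bool) (s : sticker) : sticker :=
  let n := basis a (sgnb sg) in
  if coord (corner_vec s.1) a == sgnb sg then
    (vec_corner (rotcw n (corner_vec s.1)), vec_axis (rotcw n (sticker_normal s)))
  else s.

Lemma move_fun4 a sg s :
  move_fun a sg (move_fun a sg (move_fun a sg (move_fun a sg s))) = s.
Proof.
apply/eqP; case: a => -[|[|[|//]]] ? ; case: sg;
  case: s => -[[[] []] []] -[[|[|[|//]]] ?]; vm_compute; reflexivity.
Qed.

Lemma move_fun_inj a sg : injective (move_fun a sg).
Proof.
apply: (can_inj (g := fun s => move_fun a sg (move_fun a sg (move_fun a sg s)))).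
exact: move_fun4.
Qed.

Definition move (a : 'I_3) (sg : bool) : {perm sticker} := perm (@move_fun_inj a sg).

Definition mu := move (ax1) true.
Definition md := move (ax1) false.
Definition mf := move (ax2) true.
Definition mb := move (ax2) false.
Definition ml := move (ax0) false.
Definition mr := move (ax0) true.

Definition G2 : {group {perm sticker}} :=
  <<[set mu; md; mf; mb; ml; mr]>>%G.

Definition has_faithful_rep (F : fieldType) (gT : finGroupType)
    (G : {group gT}) (n : nat) : Prop :=
  exists rG : mx_representation F G n, mx_faithful rG.

Definition is_mdim (F : fieldType) (gT : finGroupType) (G : {group gT})
    (n : nat) : Prop :=
  has_faithful_rep F G n /\ forall m, (m < n)%N -> ~ has_faithful_rep F G m.

Notation RR := Rdefinitions.R.
Notation CC := (complex Rdefinitions.R).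

(* Restriction of scalars C -> R on matrices, w.r.t. the real basis
   (e_1, ..., e_n, i e_1, ..., i e_n) of C^n:  A = X + iY  |->  [X -Y; Y X]. *)
Definition realify_mx n (A : 'M[CC]_n) : 'M[RR]_(n + n) :=
  let X := map_mx (@complex.Re RR) A in
  let Y := map_mx (@complex.Im RR) A in
  block_mx X (- Y) Y X.

From HB Require Import structures.
From mathcomp Require Import all_boot all_order all_algebra all_fingroup.
From mathcomp Require Import mxrepresentation complex Rstruct zify ring.

Set Implicit Arguments.
Unset Strict Implicit.
Unset Printing Implicit Defensive.
Import GRing.Theory Num.Theory.

(* The seven twists [twist c] generate an elementary abelian subgroup N of
   order 3^7 of G_2, normalised by the face moves, which act linearly on its
   characters (weights) k in (Z/3)^7.  In a faithful representation over a
   field with a primitive cube root of unity z, the commuting matrices of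
   the twists, all of order 3, have a common eigenvector of some nonzero
   weight k; moving it by G_2 gives eigenvectors for every weight in the
   G_2-orbit of k, and a finite check shows that this orbit always has at
   least 8 elements.  Eigenvectors of distinct weights are independent, so
   the dimension is at least 8.  The complexification of a real
   representation also has the conjugate weights -k, and the orbit of k
   together with its negative always has at least 16 elements.  Conversely,
   G_2 permutes the 8 corners, rotating each by a power of z: this monomial
   representation is faithful of degree 8, and restriction of scalars turns
   it into a faithful real representation of degree 16. *)

Definition face (i : nat) : 'I_3 * bool :=
  nth (ax0, true)
    [:: (ax1, true); (ax1, false); (ax2, true); (ax2, false); (ax0, false); (ax0, true)] i.

Definition face_move (i : nat) : {perm sticker} := move (face i).1 (face i).2.

Lemma face_move_in_G2 i : face_move i \in G2.
Proof.
apply: mem_gen; rewrite /face_move /face.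
do 6 (case: i => [|i]; first by rewrite /= !inE eqxx ?orbT).
by rewrite nth_default //= !inE eqxx ?orbT.
Qed.

Definition word_perm (w : seq nat) : {perm sticker} :=
  (\prod_(i <- w) face_move i)%g.

Lemma word_perm_nil : word_perm [::] = 1%g.
Proof. exact: big_nil. Qed.

Lemma word_perm_cons i w : word_perm (i :: w) = (face_move i * word_perm w)%g.
Proof. exact: big_cons. Qed.

Lemma word_perm_cat w1 w2 :
  word_perm (w1 ++ w2) = (word_perm w1 * word_perm w2)%g.
Proof. by rewrite /word_perm big_cat. Qed.

Lemma word_perm_in_G2 w : word_perm w \in G2.
Proof.
elim: w => [|i w IHw]; first by rewrite word_perm_nil group1.
by rewrite word_perm_cons groupM ?face_move_in_G2.
Qed.

Definition word_fun (w : seq nat) (s : sticker) : sticker :=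
  foldl (fun s i => move_fun (face i).1 (face i).2 s) s w.

Lemma word_permE w : word_perm w =1 word_fun w.
Proof.
elim: w => [|i w IHw] s; first by rewrite word_perm_nil perm1.
by rewrite word_perm_cons permM IHw permE.
Qed.

Definition corners : seq (bool * bool * bool) :=
  [:: (false, false, false); (false, false, true); (false, true, false);
      (false, true, true); (true, false, false); (true, false, true);
      (true, true, false); (true, true, true)].

Definition stickers : seq sticker :=
  [seq (c, a) | c <- corners, a <- [:: ax0; ax1; ax2]].

Lemma mem_stickers s : s \in stickers.
Proof. by case: s => -[[[] []] []] -[[|[|[|//]]] ?]; vm_compute. Qed.

Definition eq_word (w1 w2 : seq nat) : bool :=
  all (fun s => word_fun w1 s == word_fun w2 s) stickers.

Lemma eq_wordP w1 w2 : eq_word w1 w2 -> word_perm w1 = word_perm w2.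
Proof.
by move/allP=> eq_w; apply/permP=> s; rewrite !word_permE; apply/eqP/eq_w/mem_stickers.
Qed.

(* [twist c], for [c < 7], turns the corner [nth _ corners c] a third of a
   turn in place and the corner [(true, true, true)] a third of a turn back. *)
Definition twist_word (c : nat) : seq nat := nth [::] [::
  [:: 2; 2; 2; 1; 1; 1; 0; 0; 1; 2; 3; 4; 0; 0; 1; 2; 3; 4; 0; 0; 1; 2; 3; 4; 0; 0; 1; 2;
      3; 4; 1; 2];
  [:: 2; 2; 2; 5; 5; 5; 0; 0; 1; 2; 3; 4; 0; 0; 1; 2; 3; 4; 0; 0; 1; 2; 3; 4; 0; 0; 1; 2;
      3; 4; 5; 2];
  [:: 4; 4; 4; 2; 2; 2; 1; 1; 1; 0; 0; 1; 2; 3; 4; 0; 0; 1; 2; 3; 4; 0; 0; 1; 2; 3; 4; 0;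
      0; 1; 2; 3; 4; 1; 2; 4];
  [:: 2; 2; 2; 1; 1; 1; 1; 1; 1; 0; 0; 1; 2; 3; 4; 0; 0; 1; 2; 3; 4; 0; 0; 1; 2; 3; 4; 0;
      0; 1; 2; 3; 4; 1; 1; 2];
  [:: 2; 2; 2; 0; 0; 1; 2; 3; 4; 0; 0; 1; 2; 3; 4; 0; 0; 1; 2; 3; 4; 0; 0; 1; 2; 3; 4; 2];
  [:: 5; 5; 5; 2; 2; 2; 2; 2; 2; 0; 0; 1; 2; 3; 4; 0; 0; 1; 2; 3; 4; 0; 0; 1; 2; 3; 4; 0;
      0; 1; 2; 3; 4; 2; 2; 5];
  [:: 3; 3; 3; 2; 2; 2; 0; 0; 1; 2; 3; 4; 0; 0; 1; 2; 3; 4; 0; 0; 1; 2; 3; 4; 0; 0; 1; 2;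
      3; 4; 2; 3]] c.

Definition twist (c : nat) : {perm sticker} := word_perm (twist_word c).

Lemma twist_in_G2 c : twist c \in G2.
Proof. exact: word_perm_in_G2. Qed.

Lemma twist_ge7 c : 7 <= c -> twist c = 1%g.
Proof. by move=> ge7c; rewrite /twist /twist_word nth_default // word_perm_nil. Qed.

Lemma twist_order3 c : (twist c ^+ 3 = 1)%g.
Proof.
have [lt_c7 | /twist_ge7 -> ] := ltnP c 7; last exact: expg1n.
have : all (fun c => eq_word (twist_word c ++ twist_word c ++ twist_word c) [::])
         (iota 0 7) by vm_compute.
move/allP/(_ c); rewrite mem_iota => /(_ lt_c7) /eq_wordP.
by rewrite !word_perm_cat word_perm_nil !expgS expg0 mulg1.
Qed.

Lemma twist_commute c d : commute (twist c) (twist d).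
Proof.
have [lt_c7 | /twist_ge7 -> ] := ltnP c 7; last by rewrite /commute mul1g mulg1.
have [lt_d7 | /twist_ge7 -> ] := ltnP d 7; last exact: commute1.
have : all (fun c => all (fun d => eq_word (twist_word c ++ twist_word d)
                                           (twist_word d ++ twist_word c))
                          (iota 0 7)) (iota 0 7) by vm_compute.
move/allP/(_ c); rewrite mem_iota => /(_ lt_c7) /allP /(_ d).
by rewrite mem_iota => /(_ lt_d7) /eq_wordP; rewrite !word_perm_cat.
Qed.

Lemma twist0_neq1 : twist 0 != 1%g.
Proof.
apply/eqP => /permP /(_ ((false, false, false), ax0)) /eqP.
by rewrite word_permE perm1; vm_compute.
Qed.

(* [conj_exp g c j] is the exponent of [twist j] in
   [face_move g * twist c * (face_move g)^-1]. *)
Definition conj_exp (g c j : nat) : nat := nth 0 (nth [::] (nth [::] [::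
  [:: [:: 1; 0; 0; 0; 0; 0; 2]; [:: 0; 1; 0; 0; 0; 0; 2]; [:: 0; 0; 0; 1; 0; 0; 2];
      [:: 0; 0; 0; 0; 0; 0; 2]; [:: 0; 0; 0; 0; 1; 0; 2]; [:: 0; 0; 0; 0; 0; 1; 2];
      [:: 0; 0; 1; 0; 0; 0; 2]];
  [:: [:: 0; 0; 0; 0; 1; 0; 0]; [:: 1; 0; 0; 0; 0; 0; 0]; [:: 0; 0; 1; 0; 0; 0; 0];
      [:: 0; 0; 0; 1; 0; 0; 0]; [:: 0; 0; 0; 0; 0; 1; 0]; [:: 0; 1; 0; 0; 0; 0; 0];
      [:: 0; 0; 0; 0; 0; 0; 1]];
  [:: [:: 1; 0; 0; 2; 0; 0; 0]; [:: 0; 0; 0; 2; 0; 1; 0]; [:: 0; 0; 1; 2; 0; 0; 0];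
      [:: 0; 1; 0; 2; 0; 0; 0]; [:: 0; 0; 0; 2; 1; 0; 0]; [:: 0; 0; 0; 2; 0; 0; 0];
      [:: 0; 0; 0; 2; 0; 0; 1]];
  [:: [:: 0; 0; 1; 0; 0; 0; 0]; [:: 0; 1; 0; 0; 0; 0; 0]; [:: 0; 0; 0; 0; 0; 0; 1];
      [:: 0; 0; 0; 1; 0; 0; 0]; [:: 1; 0; 0; 0; 0; 0; 0]; [:: 0; 0; 0; 0; 0; 1; 0];
      [:: 0; 0; 0; 0; 1; 0; 0]];
  [:: [:: 0; 1; 0; 0; 0; 0; 0]; [:: 0; 0; 0; 1; 0; 0; 0]; [:: 1; 0; 0; 0; 0; 0; 0];
      [:: 0; 0; 1; 0; 0; 0; 0]; [:: 0; 0; 0; 0; 1; 0; 0]; [:: 0; 0; 0; 0; 0; 1; 0];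
      [:: 0; 0; 0; 0; 0; 0; 1]];
  [:: [:: 1; 0; 0; 0; 0; 2; 0]; [:: 0; 1; 0; 0; 0; 2; 0]; [:: 0; 0; 1; 0; 0; 2; 0];
      [:: 0; 0; 0; 1; 0; 2; 0]; [:: 0; 0; 0; 0; 0; 2; 1]; [:: 0; 0; 0; 0; 1; 2; 0];
      [:: 0; 0; 0; 0; 0; 2; 0]]]
  g) c) j.

Definition conj_word (g c : nat) : seq nat :=
  flatten [seq flatten (nseq (conj_exp g c j) (twist_word j)) | j <- iota 0 7].

Lemma word_perm_conj_word g c :
  word_perm (conj_word g c) = (\prod_(j <- iota 0 7) twist j ^+ conj_exp g c j)%g.
Proof.
rewrite /conj_word; elim: (iota 0 7) => [|j js IHjs] /=.
  by rewrite big_nil word_perm_nil.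
rewrite word_perm_cat IHjs big_cons; congr (_ * _)%g.
elim: (conj_exp g c j) => [|t IHt] /=; first by rewrite word_perm_nil.
by rewrite word_perm_cat IHt expgS.
Qed.

Lemma face_move_twist g c : g < 6 -> c < 7 ->
  (face_move g * twist c
   = (\prod_(j <- iota 0 7) twist j ^+ conj_exp g c j) * face_move g)%g.
Proof.
move=> lt_g6 lt_c7; rewrite -word_perm_conj_word.
have : all (fun g => all (fun c => eq_word (g :: twist_word c) (conj_word g c ++ [:: g]))
                          (iota 0 7)) (iota 0 6) by vm_compute.
move/allP/(_ g); rewrite mem_iota => /(_ lt_g6) /allP /(_ c).
rewrite mem_iota => /(_ lt_c7) /eq_wordP.
by rewrite word_perm_cat !word_perm_cons word_perm_nil mulg1.
Qed.

(* Seen from outside, the axes x, y, z run clockwise around a corner exactly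
   when the product of its coordinates is negative, i.e. when it has an even
   number of positive coordinates: [sticker_ori] numbers the three stickers of
   every corner 0, 1, 2 clockwise, starting from the one on an x face. *)
Definition sticker_ori (s : sticker) : nat :=
  if ~~ (s.1.1.1 (+) s.1.1.2 (+) s.1.2) then val s.2 else (3 - val s.2) %% 3.

Lemma sticker_ori_lt3 s : sticker_ori s < 3.
Proof. by rewrite /sticker_ori; case: ifP => _; [apply: ltn_ord | rewrite ltn_pmod]. Qed.

Lemma sticker_ori_ax0 c : sticker_ori (c, ax0) = 0.
Proof. by rewrite /sticker_ori; case: ifP. Qed.

Lemma sticker_eq (s t : sticker) : s.1 = t.1 -> sticker_ori s = sticker_ori t -> s = t.
Proof.
case: s t => c a [_ b] /= <-; rewrite /sticker_ori.
by case: ifP => _; case: a b => -[|[|[|//]]] ? [[|[|[|//]]] ?] //= _;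
  congr (_, _); apply: val_inj.
Qed.

Definition corner_of (i : 'I_8) : bool * bool * bool := nth (false, false, false) corners i.
Definition corner_index (c : bool * bool * bool) : 'I_8 := inord (index c corners).

Lemma corner_indexK : cancel corner_index corner_of.
Proof. by case=> -[[] []] []; rewrite /corner_index /corner_of inordK. Qed.

Lemma corner_ofK : cancel corner_of corner_index.
Proof.
by move=> i; apply/val_inj; case: i => -[|[|[|[|[|[|[|[|//]]]]]]]] ?; rewrite /= inordK.
Qed.

Definition rigid_at (f : sticker -> sticker) (s : sticker) : bool :=
  ((f s).1 == (f (s.1, ax0)).1) &&
  (sticker_ori (f s) == (sticker_ori (f (s.1, ax0)) + sticker_ori s) %% 3).

Definition rigid_perms : {set {perm sticker}} :=
  [set g : {perm sticker} | [forall s, rigid_at g s]].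

Lemma rigid_perms_group_set : group_set rigid_perms.
Proof.
apply/group_setP; split.
  rewrite inE; apply/forallP => s; rewrite /rigid_at !perm1 /= eqxx sticker_ori_ax0.
  by rewrite add0n modn_small ?sticker_ori_lt3 ?eqxx.
move=> g h; rewrite !inE => /forallP rigid_g /forallP rigid_h; apply/forallP => s.
rewrite /rigid_at !permM.
case/andP: (rigid_g s) => /eqP g1 /eqP g2.
case/andP: (rigid_h (g s)) => /eqP h1 /eqP h2.
case/andP: (rigid_h (g (s.1, ax0))) => /eqP h1' /eqP h2'.
by rewrite h1 h1' g1 eqxx h2 h2' g1 g2 modnDmr modnDml addnA eqxx.
Qed.

Canonical rigid_group := Group rigid_perms_group_set.

Lemma face_move_rigid i : i < 6 -> face_move i \in rigid_group.
Proof.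
move=> lt_i6; rewrite inE; apply/forallP => s; rewrite /rigid_at /face_move /move !permE.
have : all (fun i => all (rigid_at (move_fun (face i).1 (face i).2)) stickers) (iota 0 6).
  by vm_compute.
by move/allP/(_ i); rewrite mem_iota => /(_ lt_i6) /allP /(_ s (mem_stickers s)).
Qed.

Lemma G2_rigid : G2 \subset rigid_group.
Proof.
rewrite gen_subG; apply/subsetP => g; rewrite !in_setU !in_set1 -!orbA.
case/or4P => [| | | /orP [| /orP []]] /eqP ->.
- exact: (@face_move_rigid 0).
- exact: (@face_move_rigid 1).
- exact: (@face_move_rigid 2).
- exact: (@face_move_rigid 3).
- exact: (@face_move_rigid 4).
- exact: (@face_move_rigid 5).
Qed.

Definition is_weight m (k : seq nat) : bool :=
  (size k == m) && all (fun j => j < 3) k.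

Definition act_weight (g : nat) (k : seq nat) : seq nat :=
  [seq (sumn [seq conj_exp g c j * nth 0 k j | j <- iota 0 7]) %% 3 | c <- iota 0 7].

Definition act_word (w : seq nat) (k : seq nat) : seq nat :=
  foldl (fun k g => act_weight g k) k w.

Definition orbit_words : seq (seq nat) :=
  [:: [:: 3; 1]; [:: 0; 0; 4]; [:: 1; 3; 2]; [:: 1; 5; 1]; [:: 1; 5; 5]; [:: 2; 1; 5];
      [:: 2; 2; 0]; [:: 3; 0; 0]; [:: 3; 4; 3]; [:: 4; 1; 1]; [:: 4; 2; 2]; [:: 4; 4; 2];
      [:: 5; 0; 5]; [:: 5; 3; 3]].

Definition weight_orbit (k : seq nat) : seq (seq nat) :=
  [seq act_word w k | w <- orbit_words].

Definition neg_weight (k : seq nat) : seq nat := [seq (2 * j) %% 3 | j <- k].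

Fixpoint all_weights (m : nat) : seq (seq nat) :=
  if m is m'.+1 then [seq j :: k | j <- iota 0 3, k <- all_weights m'] else [:: [::]].

Lemma mem_all_weights m k : is_weight m k -> k \in all_weights m.
Proof.
elim: m k => [|m IHm] [|j k] // /andP [/eqP [size_k] /andP [lt_j3 k_lt3]].
apply: (allpairs_f (fun j k => j :: k)); first by rewrite mem_iota.
by apply: IHm; rewrite /is_weight size_k eqxx.
Qed.

Lemma weight_orbit_size k : is_weight 7 k -> k != nseq 7 0 ->
  8 <= size (undup (weight_orbit k)) /\
  16 <= size (undup (weight_orbit k ++ map neg_weight (weight_orbit k))).
Proof.
move=> /mem_all_weights k_wt k_nz.
have : all (fun k => (k == nseq 7 0) ||
  (8 <= size (undup (weight_orbit k))) &&
  (16 <= size (undup (weight_orbit k ++ map neg_weight (weight_orbit k)))))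
  (all_weights 7) by vm_compute.
by move/allP/(_ k k_wt); rewrite (negPf k_nz) => /andP.
Qed.

Lemma is_weight_act_word w k : is_weight 7 k -> is_weight 7 (act_word w k).
Proof.
elim: w k => [|g w IHw] k // _; apply: IHw.
rewrite /is_weight size_map size_iota eqxx andTb.
by apply/allP => _ /mapP [c _ ->]; rewrite ltn_mod.
Qed.

Lemma is_weight_neg k : is_weight 7 k -> is_weight 7 (neg_weight k).
Proof.
rewrite /is_weight size_map => /andP [-> _]; rewrite andTb.
by apply/allP => _ /mapP [j _ ->]; rewrite ltn_mod.
Qed.

Lemma orbit_weights k : is_weight 7 k -> all (is_weight 7) (weight_orbit k).
Proof. by move=> k_wt; apply/allP => _ /mapP [w _ ->]; apply: is_weight_act_word. Qed.

Local Open Scope ring_scope.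

Lemma cube_root_sum (F : fieldType) (w : F) :
  w ^+ 3 = 1 -> 1 + w + w ^+ 2 = (w == 1)%:R * 3%:R.
Proof.
move=> w3; have [-> | w_neq1] := eqVneq w 1; first by rewrite expr1n mul1r; ring.
have : (w - 1) * (1 + w + w ^+ 2) = w ^+ 3 - 1 by ring.
by rewrite w3 subrr mul0r => /eqP; rewrite mulf_eq0 subr_eq0 (negPf w_neq1) => /eqP.
Qed.

Section PrimitiveCubeRoot.

Variables (F : fieldType) (z : F).
Hypothesis z_prim : 3.-primitive_root z.

Let z3 : z ^+ 3 = 1 := prim_expr_order z_prim.
Let nz3 : 3%:R != 0 :> F := prim_root_natf_neq0 z_prim.

Lemma expr_mod3 i k : i = k %[mod 3] -> z ^+ i = z ^+ k.
Proof. by move=> eq_ik; rewrite -(prim_expr_mod z_prim) eq_ik prim_expr_mod. Qed.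

Lemma prim3_expr_eq1 i : (z ^+ i == 1) = (i == 0 %[mod 3]).
Proof. by rewrite -(prim_order_dvd z_prim) /dvdn. Qed.

Variable n : nat.
Implicit Types (M N : 'M[F]_n) (v : 'rV[F]_n).

(* [z ^+ (2 * j)] and [z ^+ (4 * j)] stand for [z ^- j] and [z ^- (2 * j)]. *)
Definition eigen_proj M (j : nat) : 'M_n :=
  3%:R^-1 *: (1%:M + z ^+ (2 * j) *: M + z ^+ (4 * j) *: (M *m M)).

Lemma eigen_projE M v a j :
  v *m M = z ^+ a *: v -> v *m eigen_proj M j = (a == j %[mod 3])%:R *: v.
Proof.
move=> vM; set w := z ^+ (2 * j + a).
have vMM : v *m (M *m M) = z ^+ (a + a) *: v.
  by rewrite mulmxA vM -scalemxAl vM scalerA -exprD.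
have w3 : w ^+ 3 = 1 by rewrite -exprM mulnC exprM z3 expr1n.
have w_eq1 : (w == 1) = (a == j %[mod 3]).
  by rewrite prim3_expr_eq1; apply/eqP/eqP; lia.
have w2 : w ^+ 2 = z ^+ (4 * j + (a + a)).
  by rewrite -exprM; congr (_ ^+ _); lia.
rewrite /eigen_proj -scalemxAr !mulmxDr mulmx1 -!scalemxAr vM vMM !scalerA -!exprD.
rewrite -{1}[v]scale1r -!scalerDl scalerA -/w -w2 cube_root_sum // w_eq1.
by rewrite mulrCA mulVf // mulr1.
Qed.

Lemma prim3_sum : 1 + z + z ^+ 2 = 0.
Proof.
by rewrite cube_root_sum // -[z in z == 1]expr1 prim3_expr_eq1 mul0r.
Qed.

Lemma sum_eigen_proj M : eigen_proj M 0 + eigen_proj M 1 + eigen_proj M 2 = 1%:M.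
Proof.
have z2 : z ^+ 2 = - 1 - z by rewrite -[LHS]subr0 -prim3_sum; ring.
apply/matrixP => i k; rewrite !mxE !muln0 !muln1 !expr0 -[(2 * 2)%N]/4%N -[(4 * 2)%N]/8%N.
rewrite (@expr_mod3 4 1) // (@expr_mod3 8 2) // expr1 z2; field; exact: nz3.
Qed.

Lemma eigen_proj_comm M N j :
  N *m M = M *m N -> N *m eigen_proj M j = eigen_proj M j *m N.
Proof.
move=> NM; rewrite /eigen_proj -scalemxAl -scalemxAr; congr (_ *: _).
rewrite !mulmxDl !mulmxDr mulmx1 mul1mx -!scalemxAl -!scalemxAr !mulmxA NM.
by rewrite -!mulmxA NM.
Qed.

Lemma eigen_proj_neq0 M v :
  v != 0 -> exists2 j, (j < 3)%N & v *m eigen_proj M j != 0.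
Proof.
move=> v_nz; have [j0 | ] := eqVneq (v *m eigen_proj M 0) 0; last by exists 0%N.
have [j1 | ] := eqVneq (v *m eigen_proj M 1) 0; last by exists 1%N.
have [j2 | ] := eqVneq (v *m eigen_proj M 2) 0; last by exists 2%N.
by move: v_nz; rewrite -[v]mulmx1 -(sum_eigen_proj M) !mulmxDr j0 j1 j2 !addr0 eqxx.
Qed.

Section OrderThree.

Variable M : 'M[F]_n.
Hypothesis M3 : M *m M *m M = 1%:M.

Lemma eigen_projM j : eigen_proj M j *m M = z ^+ j *: eigen_proj M j.
Proof.
rewrite /eigen_proj -scalemxAl !mulmxDl mul1mx -!scalemxAl M3 scalerA mulrC -scalerA.
congr (_ *: _); rewrite !scalerDr !scalerA -!exprD.
rewrite (@expr_mod3 (j + 2 * j) 0) ?(@expr_mod3 (j + 4 * j) (2 * j));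
  rewrite ?(@expr_mod3 (4 * j) j); try lia.
by rewrite expr0 scale1r [LHS]addrC addrA.
Qed.

Lemma nontrivial_eigenvector : M != 1%:M ->
  exists j, (0 < j < 3)%N /\ exists2 v : 'rV_n, v != 0 & v *m M = z ^+ j *: v.
Proof.
rewrite -subr_eq0 => /rowV0Pn [_ /submxP [x ->] u_nz].
have [j lt_j3 uE_nz] := eigen_proj_neq0 M u_nz.
exists j; split.
  rewrite lt_j3 lt0n andbT; apply: contraNneq uE_nz => ->; rewrite -mulmxA.
  rewrite eigen_proj_comm; last by rewrite mulmxBl mulmxBr mulmx1 mul1mx.
  by rewrite mulmxBr mulmx1 eigen_projM expr0 scale1r subrr !mulmx0.
exists (x *m (M - 1%:M) *m eigen_proj M j) => //.
by rewrite -mulmxA eigen_projM scalemxAr.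
Qed.

End OrderThree.

Section Weights.

Variable Ms : nat -> 'M[F]_n.
Hypothesis Ms3 : forall c, Ms c *m Ms c *m Ms c = 1%:M.
Hypothesis Ms_comm : forall c d, Ms c *m Ms d = Ms d *m Ms c.

Definition weight_vector v (k : seq nat) : Prop :=
  forall c, (c < size k)%N -> v *m Ms c = z ^+ nth 0%N k c *: v.

Lemma weight_vector_rcons v k : v != 0 -> weight_vector v k ->
  exists j, (j < 3)%N /\ exists2 v' : 'rV_n, v' != 0 & weight_vector v' (rcons k j).
Proof.
move=> v_nz vk; have [j lt_j3 vE_nz] := eigen_proj_neq0 (Ms (size k)) v_nz.
exists j; split => //; exists (v *m eigen_proj (Ms (size k)) j) => // c.
rewrite size_rcons ltnS leq_eqVlt nth_rcons => /predU1P [-> | lt_ck].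
  by rewrite ltnn eqxx -mulmxA eigen_projM // scalemxAr.
by rewrite lt_ck -mulmxA -eigen_proj_comm // mulmxA vk // -scalemxAl.
Qed.

Lemma exists_weight_vector m : Ms 0 != 1%:M ->
  exists k, [/\ is_weight m.+1 k, nth 0%N k 0 != 0%N &
                exists2 v : 'rV_n, v != 0 & weight_vector v k].
Proof.
move=> /(nontrivial_eigenvector (Ms3 0)) [j [/andP [j_gt0 lt_j3] [v v_nz vM]]].
elim: m => [|m [k [/andP [/eqP size_k k_lt3] k0 [w w_nz wk]]]].
  exists [:: j]; split; first by rewrite /is_weight /= lt_j3.
    by rewrite -lt0n.
  by exists v => // -[|//] _.
have [i [lt_i3 [w' w'_nz w'k]]] := weight_vector_rcons w_nz wk.
exists (rcons k i); split; last by exists w'.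
  by rewrite /is_weight size_rcons size_k eqxx all_rcons lt_i3.
by rewrite nth_rcons size_k.
Qed.

Definition weight_proj (k : seq nat) : 'M_n :=
  foldr (fun c P => eigen_proj (Ms c) (nth 0%N k c) *m P) 1%:M (iota 0 (size k)).

Lemma weight_projE m v k k' :
    is_weight m k -> is_weight m k' -> weight_vector v k' ->
  v *m weight_proj k = (k' == k)%:R *: v.
Proof.
move=> /andP [/eqP size_k k_lt3] /andP [/eqP size_k' k'_lt3] vk'.
have proj_cs cs : {subset cs <= iota 0 m} ->
    v *m foldr (fun c P => eigen_proj (Ms c) (nth 0%N k c) *m P) 1%:M cs
    = (all (fun c => nth 0%N k' c == nth 0%N k c) cs)%:R *: v.
  elim: cs => [|c cs IHcs] sub_cs /=; first by rewrite mulmx1 scale1r.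
  have lt_cm : (c < m)%N by have := sub_cs c (mem_head _ _); rewrite mem_iota.
  rewrite mulmxA (eigen_projE _ (vk' c _)) ?size_k' // -scalemxAl IHcs; last first.
    by move=> d d_cs; apply: sub_cs; rewrite inE d_cs orbT.
  rewrite scalerA -natrM mulnb !modn_small //.
    by apply: (allP k_lt3); rewrite mem_nth ?size_k.
  by apply: (allP k'_lt3); rewrite mem_nth ?size_k'.
rewrite /weight_proj size_k proj_cs //; congr ((nat_of_bool _)%:R *: _).
apply/allP/eqP => [eq_k | -> c _ //].
apply: (@eq_from_nth _ 0%N); rewrite ?size_k ?size_k' // => c lt_cm.
by apply/eqP/eq_k; rewrite mem_iota.
Qed.

Lemma weights_le_dim m (ks : seq (seq nat)) : uniq ks -> all (is_weight m) ks ->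
    (forall k, k \in ks -> exists2 v : 'rV_n, v != 0 & weight_vector v k) ->
  (size ks <= n)%N.
Proof.
move=> ks_uniq /allP ks_wt ks_vec.
have vec_i (i : 'I_(size ks)) :
    exists v : 'rV_n, v != 0 /\ weight_vector v (nth [::] ks i).
  by have [v v_nz vk] := ks_vec _ (mem_nth [::] (ltn_ord i)); exists v.
have [f f_vec] := fin_all_exists vec_i.
pose V := \matrix_i f i.
suff /eqP <- : row_free V by apply: rank_leq_col.
rewrite -kermx_eq0; apply/rowV0Pn => -[u /sub_kermxP uV0]; apply/negP/negPn.
apply/eqP/rowP => j; rewrite mxE.
have /eqP : u *m V *m weight_proj (nth [::] ks j) = 0 by rewrite uV0 mul0mx.
have wt (i : 'I_(size ks)) : is_weight m (nth [::] ks i) by apply/ks_wt/mem_nth.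
rewrite (mulmx_sum_row u V) mulmx_suml (bigD1 j) //= big1 ?addr0 => [|i ij].
  have [fj_nz fjk] := f_vec j.
  rewrite -scalemxAl rowK (weight_projE (wt j) (wt j) fjk) eqxx scale1r.
  by rewrite scalemx_eq0 (negPf fj_nz) orbF => /eqP.
have [_ fik] := f_vec i.
rewrite -scalemxAl rowK (weight_projE (wt j) (wt i) fik) nth_uniq //.
by rewrite (inj_eq val_inj) (negPf ij) scale0r scaler0.
Qed.

End Weights.

End PrimitiveCubeRoot.

Section ReprEigenvectors.

Variables (F : fieldType) (gT : finGroupType) (G : {group gT}) (n : nat).
Variable rG : mx_representation F G n.

Lemma mulmx_repr_neq0 (v : 'rV_n) x : x \in G -> v != 0 -> v *m rG x != 0.
Proof.
move=> Gx; apply: contraNneq => vx0.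
by rewrite -(mulmxK (repr_mx_unit rG Gx) v) vx0 mul0mx.
Qed.

Lemma repr_eigen_expg (v : 'rV_n) x a t :
  x \in G -> v *m rG x = a *: v -> v *m rG (x ^+ t)%g = a ^+ t *: v.
Proof.
move=> Gx vx; elim: t => [|t IHt]; first by rewrite repr_mx1 mulmx1 scale1r.
by rewrite expgS repr_mxM ?groupX // mulmxA vx -scalemxAl IHt scalerA exprS.
Qed.

Lemma repr_eigen_prod (I : eqType) (r : seq I) (x : I -> gT) (a : I -> F)
    (v : 'rV_n) :
    (forall i, i \in r -> x i \in G /\ v *m rG (x i) = a i *: v) ->
  v *m rG (\prod_(i <- r) x i)%g = (\prod_(i <- r) a i) *: v.
Proof.
elim: r => [|i r IHr] eig_r; first by rewrite !big_nil repr_mx1 mulmx1 scale1r.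
have [Gxi vxi] := eig_r i (mem_head _ _).
have eig_r' j : j \in r -> x j \in G /\ v *m rG (x j) = a j *: v.
  by move=> rj; apply: eig_r; rewrite inE rj orbT.
have Gr : (\prod_(j <- r) x j)%g \in G.
  by rewrite big_seq; apply: group_prod => j /eig_r' [].
by rewrite !big_cons repr_mxM // mulmxA vxi -scalemxAl IHr // scalerA.
Qed.

End ReprEigenvectors.

Section CubeWeights.

Variables (F : fieldType) (z : F).
Hypothesis z_prim : 3.-primitive_root z.
Variables (n : nat) (rho : mx_representation F G2 n).

Definition twist_mx (c : nat) : 'M[F]_n := rho (twist c).

Lemma twist_mx_order3 c : twist_mx c *m twist_mx c *m twist_mx c = 1%:M.
Proof.
rewrite /twist_mx -!repr_mxM ?groupM ?twist_in_G2 //.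
have -> : (twist c * twist c * twist c = twist c ^+ 3)%g.
  by rewrite !expgS expg0 mulg1 mulgA.
by rewrite twist_order3 repr_mx1.
Qed.

Lemma twist_mx_comm c d : twist_mx c *m twist_mx d = twist_mx d *m twist_mx c.
Proof. by rewrite /twist_mx -!repr_mxM ?twist_in_G2 // twist_commute. Qed.

Lemma weight_vector_face g (v : 'rV_n) k : (g < 6)%N -> size k = 7%N ->
    weight_vector z twist_mx v k ->
  weight_vector z twist_mx (v *m rho (face_move g)) (act_weight g k).
Proof.
move=> lt_g6 size_k vk c; rewrite size_map size_iota => lt_c7.
rewrite /twist_mx -mulmxA -repr_mxM ?face_move_in_G2 ?twist_in_G2 //.
rewrite face_move_twist // repr_mxM ?face_move_in_G2 ?group_prod // => [|j _]; last first.
  by rewrite groupX ?twist_in_G2.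
rewrite mulmxA (repr_eigen_prod (a := fun j => (z ^+ nth 0%N k j) ^+ conj_exp g c j)).
  rewrite -scalemxAl (nth_map 0%N) ?size_iota // nth_iota // prim_expr_mod //.
  rewrite sumnE big_map -prodrXr; congr (_ *: _).
  by apply: eq_bigr => j _; rewrite -exprM mulnC.
move=> j; rewrite mem_iota => /andP [_ lt_j7]; rewrite groupX ?twist_in_G2 //; split=> //.
by apply: repr_eigen_expg; rewrite ?twist_in_G2 // vk ?size_k.
Qed.

Lemma weight_vector_word w (v : 'rV_n) k :
    all (fun g => g < 6)%N w -> size k = 7%N -> weight_vector z twist_mx v k ->
  weight_vector z twist_mx (v *m rho (word_perm w)) (act_word w k).
Proof.
elim: w v k => [|g w IHw] v k /=; first by rewrite word_perm_nil repr_mx1 mulmx1.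
move=> /andP [lt_g6 w_lt6] size_k vk.
rewrite word_perm_cons repr_mxM ?face_move_in_G2 ?word_perm_in_G2 // mulmxA.
by apply: IHw; rewrite ?size_map ?size_iota //; apply: weight_vector_face.
Qed.

End CubeWeights.

Section LowerBound.

Variables (F : fieldType) (z : F).
Hypothesis z_prim : 3.-primitive_root z.
Variables (n : nat) (rho : mx_representation F G2 n).
Hypothesis rho_faithful : mx_faithful rho.

Lemma twist_mx0_neq1 : twist_mx rho 0 != 1%:M.
Proof.
apply: contra twist0_neq1 => /eqP rho_twist0; apply/eqP.
apply: (mx_faithful_inj rho_faithful); rewrite ?twist_in_G2 ?group1 //.
by rewrite repr_mx1.
Qed.

Lemma exists_faithful_weight : exists k, [/\ is_weight 7 k, k != nseq 7 0%N &
  exists2 v : 'rV_n, v != 0 & weight_vector z (twist_mx rho) v k].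
Proof.
have [k [k_wt k0_nz kv]] := exists_weight_vector z_prim (twist_mx_order3 rho)
  (twist_mx_comm rho) 6 twist_mx0_neq1.
by exists k; split=> //; apply: contraNneq k0_nz => ->.
Qed.

Lemma orbit_weight_vector k v : is_weight 7 k -> v != 0 ->
    weight_vector z (twist_mx rho) v k ->
  forall k', k' \in weight_orbit k ->
  exists2 v' : 'rV_n, v' != 0 & weight_vector z (twist_mx rho) v' k'.
Proof.
move=> /andP [/eqP size_k _] v_nz vk _ /mapP [w w_orb ->].
exists (v *m rho (word_perm w)); first by rewrite mulmx_repr_neq0 ?word_perm_in_G2.
by apply: weight_vector_word => //; move: w_orb; apply/allP.
Qed.

Lemma mx_faithful_dim_ge8 : (8 <= n)%N.
Proof.
have [k [k_wt k_nz [v v_nz vk]]] := exists_faithful_weight.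
have [orbit8 _] := weight_orbit_size k_wt k_nz.
apply: leq_trans orbit8 (weights_le_dim z_prim (Ms := twist_mx rho) (m := 7)
  (undup_uniq _) _ _).
  by apply/allP => k' /[!mem_undup] /(allP (orbit_weights k_wt)).
by move=> k' /[!mem_undup]; apply: orbit_weight_vector k_wt v_nz vk k'.
Qed.

End LowerBound.

Lemma prim3_root (F : fieldType) (w : F) :
  w ^+ 3 = 1 -> w != 1 -> 3.-primitive_root w.
Proof.
move=> w3 w_neq1; apply/andP; split=> //; apply/forallP => -[[|[|[|//]]] ?];
  rewrite /= unity_rootE ?expr1 ?(negPf w_neq1) ?w3 ?eqxx //.
rewrite eqbF_neg; apply: contra w_neq1 => /eqP w2.
by rewrite -[w]mul1r -{1}w2 -exprSr w3.
Qed.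

Definition omega : CC := Complex (- 2^-1) (Num.sqrt 3 / 2).

Lemma omega_sqr : omega ^+ 2 = conjc omega.
Proof.
have s3 : Num.sqrt (3 : RR) * Num.sqrt 3 = 3 by rewrite -expr2 sqr_sqrtr // ler0n.
rewrite expr2 /omega /conjc -[(_ +i* _)%C * (_ +i* _)%C]/(_ +i* _)%C.
by congr Complex; [rewrite mulrACA s3 | ]; field.
Qed.

Lemma omega_prim : 3.-primitive_root omega.
Proof.
have s3 : Num.sqrt (3 : RR) * Num.sqrt 3 = 3 by rewrite -expr2 sqr_sqrtr // ler0n.
apply: prim3_root.
  rewrite exprS omega_sqr /omega /conjc -[(_ +i* _)%C * (_ +i* _)%C]/(_ +i* _)%C.
  by congr Complex; [rewrite (mulrN (Num.sqrt 3 / 2)) opprK mulrACA s3 | ]; field.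
apply/eqP => -[omega_re _].
have : (- 2^-1 : RR) < 0 by rewrite oppr_lt0 invr_gt0 ltr0n.
by rewrite omega_re ltr10.
Qed.

Section RealLowerBound.

Variables (n : nat) (rho : mx_representation RR G2 n).
Hypothesis rho_faithful : mx_faithful rho.

Let rhoC := map_repr (real_complex RR) rho.

Lemma conj_weight_vector v k : weight_vector omega (twist_mx rhoC) v k ->
  weight_vector omega (twist_mx rhoC) (map_mx conjc v) (neg_weight k).
Proof.
move=> vk c; rewrite size_map => lt_ck.
have real_twist : map_mx conjc (twist_mx rhoC c) = twist_mx rhoC c.
  by apply/matrixP => i j; rewrite !mxE conjc_real.
rewrite -real_twist -map_mxM vk // map_mxZ rmorphXn -[X in X ^+ _]/(conjc omega).
by rewrite -omega_sqr -exprM (nth_map 0%N) // prim_expr_mod // omega_prim.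
Qed.

Lemma mx_faithful_real_dim_ge16 : (16 <= n)%N.
Proof.
have rhoC_faithful : mx_faithful rhoC by rewrite map_mx_faithful.
have [k [k_wt k_nz [v v_nz vk]]] := exists_faithful_weight omega_prim rhoC_faithful.
have [_ orbit16] := weight_orbit_size k_wt k_nz.
apply: leq_trans orbit16 (weights_le_dim omega_prim (Ms := twist_mx rhoC) (m := 7)
  (undup_uniq _) _ _).
  apply/allP => k'; rewrite mem_undup mem_cat => /orP [/(allP (orbit_weights k_wt)) // |].
  by case/mapP => k'' /(allP (orbit_weights k_wt)) k''_wt ->; apply: is_weight_neg.
move=> k'; rewrite mem_undup mem_cat => /orP [|/mapP [k'' k''_orb ->]].
  move=> orb_k'; exact: (orbit_weight_vector omega_prim k_wt v_nz vk orb_k').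
have [w w_nz wk''] := orbit_weight_vector omega_prim k_wt v_nz vk k''_orb.
by exists (map_mx conjc w); [rewrite map_mx_eq0 | apply: conj_weight_vector].
Qed.

End RealLowerBound.

Section MonomialRepresentation.

Variables (F : fieldType) (z : F).
Hypothesis z_prim : 3.-primitive_root z.

Definition monomial_mx (g : {perm sticker}) : 'M[F]_8 :=
  \matrix_(i, j) if corner_index (g (corner_of i, ax0)).1 == j
                 then z ^+ sticker_ori (g (corner_of i, ax0)) else 0.

Lemma monomial_mx1 : monomial_mx 1 = 1%:M.
Proof.
apply/matrixP => i j; rewrite !mxE perm1 /= corner_ofK sticker_ori_ax0.
by case: (i == j).
Qed.

Lemma monomial_mxM :
  {in rigid_group &, {morph monomial_mx : g h / (g * h)%g >-> g *m h}}.
Proof.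
move=> g h _; rewrite inE => /forallP rigid_h; apply/matrixP => i k; rewrite !mxE.
set s := g (corner_of i, ax0).
rewrite (bigD1 (corner_index s.1)) //= big1 ?addr0 => [|j /negPf s_j]; last first.
  by rewrite !mxE eq_sym s_j mul0r.
rewrite !mxE eqxx corner_indexK permM -/s.
case/andP: (rigid_h s) => /eqP -> /eqP ->.
by rewrite (prim_expr_mod z_prim) exprD mulrC; case: ifP; rewrite ?mulr0.
Qed.

Lemma monomial_mx_repr : mx_repr G2 monomial_mx.
Proof.
split=> [|g h G2g G2h]; first exact: monomial_mx1.
by apply: monomial_mxM; apply: (subsetP G2_rigid).
Qed.

Definition monomial_repr := MxRepresentation monomial_mx_repr.

Lemma monomial_repr_faithful : mx_faithful monomial_repr.
Proof.
apply/subsetP => g /rkerP [G2g g1]; rewrite inE; apply/eqP/permP => s; rewrite perm1.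
have fix_corner i : g (corner_of i, ax0) = (corner_of i, ax0).
  move/matrixP: g1 => /(_ i i); rewrite !mxE eqxx /=.
  case: eqP => [g_i | _]; last by move/eqP; rewrite eq_sym oner_eq0.
  move/eqP; rewrite (prim3_expr_eq1 z_prim) modn_small ?sticker_ori_lt3 // => /eqP ori0.
  apply: sticker_eq; first by rewrite -[LHS]corner_indexK g_i.
  by rewrite ori0 sticker_ori_ax0.
case: s => c a; have := fix_corner (corner_index c); rewrite corner_indexK => g_c.
have := subsetP G2_rigid g G2g; rewrite inE => /forallP /(_ (c, a)).
case/andP => /eqP g_c1 /eqP g_ca.
apply: sticker_eq; first by rewrite g_c1 /= g_c.
by rewrite g_ca /= g_c sticker_ori_ax0 add0n modn_small // sticker_ori_lt3.
Qed.

End MonomialRepresentation.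

Section Realification.

Local Notation Re := (@complex.Re RR).
Local Notation Im := (@complex.Im RR).

Lemma ReD (a b : CC) : Re (a + b) = Re a + Re b. Proof. by case: a b => ? ? []. Qed.
Lemma ImD (a b : CC) : Im (a + b) = Im a + Im b. Proof. by case: a b => ? ? []. Qed.
Lemma ReM (a b : CC) : Re (a * b) = Re a * Re b - Im a * Im b.
Proof. by case: a b => ? ? []. Qed.
Lemma ImM (a b : CC) : Im (a * b) = Re a * Im b + Im a * Re b.
Proof. by case: a b => ? ? []. Qed.

Lemma map_Re_mulmx n (A B : 'M[CC]_n) :
  map_mx Re (A *m B) = map_mx Re A *m map_mx Re B - map_mx Im A *m map_mx Im B.
Proof.
apply/matrixP => i j; rewrite !mxE (big_morph Re ReD (erefl : Re 0 = 0)) -sumrB.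
by apply: eq_bigr => k _; rewrite ReM !mxE.
Qed.

Lemma map_Im_mulmx n (A B : 'M[CC]_n) :
  map_mx Im (A *m B) = map_mx Re A *m map_mx Im B + map_mx Im A *m map_mx Re B.
Proof.
apply/matrixP => i j; rewrite !mxE (big_morph Im ImD (erefl : Im 0 = 0)) -big_split.
by apply: eq_bigr => k _; rewrite ImM !mxE.
Qed.

Lemma realify_mxM n (A B : 'M[CC]_n) :
  realify_mx (A *m B) = realify_mx A *m realify_mx B.
Proof.
rewrite /realify_mx mulmx_block map_Re_mulmx map_Im_mulmx !mulmxN !mulNmx.
by congr block_mx; rewrite ?opprD // addrC.
Qed.

Lemma realify_mx1 n : realify_mx (1%:M : 'M[CC]_n) = 1%:M.
Proof.
have Re1 : map_mx Re (1%:M : 'M[CC]_n) = 1%:M.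
  by apply/matrixP => i j; rewrite !mxE; case: (i == j).
have Im1 : map_mx Im (1%:M : 'M[CC]_n) = 0.
  by apply/matrixP => i j; rewrite !mxE; case: (i == j).
by rewrite /realify_mx Re1 Im1 oppr0 scalar_mx_block.
Qed.

Lemma realify_mx_inj n : injective (@realify_mx n).
Proof.
move=> A B eq_AB; apply/matrixP => i j.
have /matrixP /(_ i j) := congr1 ulsubmx eq_AB.
have /matrixP /(_ i j) := congr1 dlsubmx eq_AB.
rewrite /realify_mx !block_mxKul !block_mxKdl !mxE.
by case: (A i j) (B i j) => ? ? [? ?] /= -> ->.
Qed.

End Realification.

Section RealifyRepresentation.

Variables (gT : finGroupType) (G : {group gT}) (n : nat).
Variable rG : mx_representation CC G n.

Lemma realify_mx_repr : mx_repr G (fun g => realify_mx (rG g)).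
Proof.
split=> [|g h Gg Gh]; first by rewrite repr_mx1 realify_mx1.
by rewrite repr_mxM // realify_mxM.
Qed.

Definition realify_repr := MxRepresentation realify_mx_repr.

Lemma realify_repr_faithful : mx_faithful rG -> mx_faithful realify_repr.
Proof.
move=> /subsetP rG_faithful; apply/subsetP => g /rkerP [Gg rg1].
by apply: rG_faithful; apply/rkerP; split=> //; apply: realify_mx_inj; rewrite realify_mx1.
Qed.

End RealifyRepresentation.

Lemma is_mdim_intro (F : fieldType) (gT : finGroupType) (G : {group gT}) n :
    (exists rG : mx_representation F G n, mx_faithful rG) ->
    (forall m (rG : mx_representation F G m), mx_faithful rG -> (n <= m)%N) ->
  is_mdim F G n.
Proof.
by move=> rep_n min_n; split=> // m lt_mn [rG /min_n]; rewrite leqNgt lt_mn.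
Qed.

Theorem theorem5p1 :
  is_mdim CC G2 8 /\ is_mdim RR G2 16 /\
  exists rC : mx_representation CC G2 8,
    mx_faithful rC /\
    exists rR : mx_representation RR G2 (8 + 8),
      mx_faithful rR /\ forall g, g \in G2 -> rR g = realify_mx (rC g).
Proof.
have rC_faithful := monomial_repr_faithful omega_prim.
have rR_faithful := realify_repr_faithful rC_faithful.
split; last split.
- apply: is_mdim_intro; first by exists (monomial_repr omega_prim).
  by move=> m rG /(mx_faithful_dim_ge8 omega_prim).
- apply: is_mdim_intro; first by exists (realify_repr (monomial_repr omega_prim)).
  by move=> m rG /mx_faithful_real_dim_ge16.
- exists (monomial_repr omega_prim); split=> //.
  by exists (realify_repr (monomial_repr omega_prim)).
Qed.
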